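(* Let $\mathfrak{h}$ be a separable complex Hilbert space, $C$ a self-adjoint positive operator in $\mathfrak{h}$, and $(G(t))_{t\ge0}$, $(L_\ell(t))_{t\ge0}$ ($\ell\in\mathbb{N}$) linear operators in $\mathfrak{h}$ with $\mathcal{D}(C)\subset\mathcal{D}(G(t))\cap\mathcal{D}(L_\ell(t))$, such that: (H2.1) $\|G(t)x\|^2\le K(t)\|x\|_C^2$ for all $t\ge0$, $x\in\mathcal{D}(C)$, with $K$ non-decreasing non-negative; (H2.2) for each $\ell$ there is a non-decreasing function $K_\ell$ with $\|L_\ell(t)x\|^2\le K_\ell(t)\|x\|_C^2$ for all $x\in\mathcal{D}(C)$, $t\ge0$; (H2.3) there exist a non-decreasing non-negative function $\alpha$ and a core $\mathfrak{D}_1$ of $C^2$ with $2\Re\langle C^2x,G(t)x\rangle+\sum_{\ell=1}^\infty\|CL_\ell(t)x\|^2\le\alpha(t)\|x\|_C^2$ for all $t\ge0$, $x\in\mathfrak{D}_1$. Then for every $x\in\mathcal{D}(C^2)$ and $t\ge0$: $L_\ell(t)x\in\mathcal{D}(C)$ for all $\ell\in\mathbb{N}$, and $2\Re\langle C^2x,G(t)x\rangle+\sum_{\ell=1}^\infty\|CL_\ell(t)x\|^2\le\alpha(t)\|x\|_C^2$.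
   Context: $\|x\|_C^2=\|x\|^2+\|Cx\|^2$ for $x\in\mathcal{D}(C)$. *)

From HB Require Import structures.
From mathcomp Require Import all_boot all_order all_algebra.
From mathcomp Require Import all_classical all_reals.
From mathcomp Require Import ereal sequences.
From mathcomp Require Import complex.

Set Implicit Arguments. Unset Strict Implicit. Unset Printing Implicit Defensive.
Import Order.TTheory GRing.Theory Num.Theory.
Local Open Scope ring_scope.
Local Open Scope classical_set_scope.

(* Convention (physics): ip is conjugate-linear in the first argument and
   linear in the second. *)

Section Hilbert.
Context {R : realType} {V : lmodType R[i]}.
Variable ip : V -> V -> R[i].

Definition is_inner_product : Prop :=
  [/\ (forall (a : R[i]) (x y z : V), ip x (a *: y + z) = a * ip x y + ip x z),
      (forall x y : V, ip y x = conjc (ip x y)),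
      (forall x : V, 0 <= ip x x) &
      (forall x : V, ip x x = 0 -> x = 0)].

Definition hnorm (x : V) : R := Num.sqrt (@complex.Re R (ip x x)).

Definition hconverges (u : nat -> V) (x : V) : Prop :=
  forall e : R, 0 < e -> exists N : nat, forall n, (N <= n)%N -> hnorm (u n - x) < e.

Definition hcauchy (u : nat -> V) : Prop :=
  forall e : R, 0 < e -> exists N : nat,
    forall m n, (N <= m)%N -> (N <= n)%N -> hnorm (u m - u n) < e.

Definition hcomplete : Prop :=
  forall u : nat -> V, hcauchy u -> exists x, hconverges u x.

Definition hdense (D : set V) : Prop :=
  forall x : V, forall e : R, 0 < e -> exists y, D y /\ hnorm (x - y) < e.

Definition hseparable : Prop := exists u : nat -> V, hdense (range u).

Definition separable_hilbert : Prop :=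
  [/\ is_inner_product, hcomplete & hseparable].

(* linear operators in V: a domain D (linear subspace) and a map A,
   linear on D (the values of A outside D are irrelevant) *)
Definition subspace (D : set V) : Prop :=
  D 0 /\ forall (a : R[i]) x y, D x -> D y -> D (a *: x + y).

Definition linop (D : set V) (A : V -> V) : Prop :=
  subspace D /\
  forall (a : R[i]) x y, D x -> D y -> A (a *: x + y) = a *: A x + A y.

(* self-adjoint: densely defined and A = A^*, i.e. the graph of A equals
   the graph of its adjoint {(y,z) | forall x in D, <Ax,y> = <x,z>} *)
Definition selfadjoint (D : set V) (A : V -> V) : Prop :=
  [/\ linop D A, hdense D &
      forall y z : V, (D y /\ A y = z) <-> (forall x, D x -> ip (A x) y = ip x z)].

Definition positive_op (D : set V) (A : V -> V) : Prop :=
  forall x, D x -> 0 <= ip x (A x).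

Definition dom_sq (D : set V) (A : V -> V) : set V := [set x | D x /\ D (A x)].

Definition is_core (D : set V) (A : V -> V) (D1 : set V) : Prop :=
  [/\ D1 `<=` D, subspace D1 &
      forall x, D x -> forall e : R, 0 < e ->
        exists y, D1 y /\ hnorm (x - y) < e /\ hnorm (A x - A y) < e].

Definition cnorm2 (C : V -> V) (x : V) : R := hnorm x ^+ 2 + hnorm (C x) ^+ 2.

End Hilbert.

Definition nondecreasing_on_pos {R : realType} (f : R -> R) : Prop :=
  forall s t : R, 0 <= s -> s <= t -> f s <= f t.

Definition nonneg_on_pos {R : realType} (f : R -> R) : Prop :=
  forall t : R, 0 <= t -> 0 <= f t.

From Pilot Require Import Defs.
From HB Require Import structures.
From mathcomp Require Import all_boot all_order all_algebra.
From mathcomp Require Import all_classical all_reals.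
From mathcomp Require Import ereal sequences.
From mathcomp Require Import complex.
From mathcomp Require Import normedtype.
From mathcomp Require Import ring lra.
Set Implicit Arguments. Unset Strict Implicit. Unset Printing Implicit Defensive.
Import Order.TTheory GRing.Theory Num.Theory.
Local Open Scope ring_scope.
Local Open Scope classical_set_scope.

(* On the core [D1] the hypothesis bounds every partial sum of [sum_l |C L_l y|^2]
   by the budget [alpha |y|_C^2 - 2 Re <C^2 y, G y>], which is continuous for the
   graph norm of [C^2] since [G] is [C]-bounded and [|C u|^2 <= |u| |C^2 u|].
   Approximate [x] in [D(C^2)] by [y] in [D1]: then [L_l y -> L_l x] while the
   [C L_l y] stay bounded.  By the Riesz representation theorem and [C = C^*] this
   puts [L_l x] in [D(C)], and [|C L_l x|^2] is lower semicontinuous along such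
   approximations, so the partial sums at [x] obey the same bound. *)

Lemma ler_of_sqr {R : realFieldType} (a b : R) : 0 <= b -> a ^+ 2 <= b ^+ 2 -> a <= b.
Proof. by move=> ? ?; nra. Qed.

Lemma le_of_forall_add_mul {R : realFieldType} (a b c : R) : 0 <= c ->
  (forall t, 0 < t -> a <= b + t * c) -> a <= b.
Proof.
move=> c0 h; apply/ler_addgt0Pr => e e0.
apply: le_trans (h (e / (c + 1)) _) _; first by rewrite divr_gt0 // ltr_wpDl.
rewrite lerD2l mulrAC ler_pdivrMr ?ltr_wpDl //; nra.
Qed.

Lemma inv_succ_lt {R : realType} (c : R) : 0 < c ->
  exists N : nat, forall n, (N <= n)%N -> n.+1%:R^-1 < c.
Proof.
move=> c0; exists (Num.truncn c^-1) => n hn.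
rewrite -(invrK c) ltf_pV2 ?posrE ?invr_gt0 ?ltr0Sn //.
by apply: lt_le_trans (truncnS_gt _) _; rewrite ler_nat ltnS.
Qed.

Section InnerProduct.
Context {R : realType} {V : lmodType R[i]} {ip : V -> V -> R[i]}.
Hypothesis hip : is_inner_product ip.
Local Notation nrm := (hnorm ip).

Definition rip x y := complex.Re (ip x y).

Lemma ipDZr a x y z : ip x (a *: y + z) = a * ip x y + ip x z.
Proof. by case: hip. Qed.

Lemma ipC x y : ip y x = conjc (ip x y).
Proof. by case: hip. Qed.

Lemma ip0r x : ip x 0 = 0.
Proof.
have := ipDZr 1 x 0 0; rewrite scale1r addr0 mul1r => h.
by apply/(addrI (ip x 0)); rewrite addr0 -h.
Qed.

Lemma ipDr x y z : ip x (y + z) = ip x y + ip x z.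
Proof. by rewrite -[y]scale1r ipDZr mul1r scale1r. Qed.

Lemma ipZr a x y : ip x (a *: y) = a * ip x y.
Proof. by rewrite -[a *: y]addr0 ipDZr ip0r addr0. Qed.

Lemma ipZl a x y : ip (a *: x) y = conjc a * ip x y.
Proof. by rewrite ipC ipZr rmorphM /= -ipC. Qed.

Lemma ripC x y : rip x y = rip y x.
Proof. by rewrite /rip [ip y x]ipC; case: (ip x y). Qed.

Lemma ripDr x y z : rip x (y + z) = rip x y + rip x z.
Proof. by rewrite /rip ipDr raddfD. Qed.

Lemma ripZr (r : R) x y : rip x (r%:C%C *: y) = r * rip x y.
Proof. by rewrite /rip ipZr; case: (ip x y) => a b /=; ring. Qed.

Lemma ripNr x y : rip x (- y) = - rip x y.
Proof. by have := ripZr (-1) x y; rewrite rmorphN1 scaleN1r mulN1r. Qed.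

Lemma ripBr x y z : rip x (y - z) = rip x y - rip x z.
Proof. by rewrite ripDr ripNr. Qed.

Lemma ripDl x y z : rip (y + z) x = rip y x + rip z x.
Proof. by rewrite !(ripC _ x) ripDr. Qed.

Lemma ripBl x y z : rip (y - z) x = rip y x - rip z x.
Proof. by rewrite !(ripC _ x) ripBr. Qed.

Lemma ripZl (r : R) x y : rip (r%:C%C *: y) x = r * rip y x.
Proof. by rewrite !(ripC _ x) ripZr. Qed.

Lemma rip0r x : rip x 0 = 0.
Proof. by rewrite /rip ip0r. Qed.

Lemma rip_scalei x y : rip ('i%C *: x) y = complex.Im (ip x y).
Proof. by rewrite /rip ipZl; case: (ip x y) => a b /=; ring. Qed.

Lemma rip_ge0 x : 0 <= rip x x.
Proof. by case: hip => _ _ + _ => /(_ x); rewrite lecE => /andP[]. Qed.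

Lemma hnorm_ge0 x : 0 <= nrm x.
Proof. exact: sqrtr_ge0. Qed.

Lemma hnorm_sqr x : nrm x ^+ 2 = rip x x.
Proof. by rewrite /hnorm sqr_sqrtr // rip_ge0. Qed.

Lemma hnorm_eq0 x : nrm x = 0 -> x = 0.
Proof.
move=> /(congr1 (fun r => r ^+ 2)); rewrite hnorm_sqr expr0n /= /rip => h.
case: hip => _ _ /(_ x) + def; rewrite lecE => /andP[/eqP im _]; apply: def.
by move: h im; case: (ip x x) => a b /= -> ->.
Qed.

Lemma hnormD_sqr x y : nrm (x + y) ^+ 2 = nrm x ^+ 2 + 2 * rip x y + nrm y ^+ 2.
Proof. by rewrite !hnorm_sqr ripDr !ripDl (ripC y x); ring. Qed.

Lemma hnormZ (r : R) x : nrm (r%:C%C *: x) = `|r| * nrm x.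
Proof.
rewrite /hnorm -!/(rip _ _) ripZr ripZl mulrA -expr2 sqrtrM ?sqr_ge0 //.
by rewrite sqrtr_sqr.
Qed.

Lemma hnormN x : nrm (- x) = nrm x.
Proof. by have := hnormZ (-1) x; rewrite rmorphN1 scaleN1r normrN1 mul1r. Qed.

Lemma hnormB_sym x y : nrm (x - y) = nrm (y - x).
Proof. by rewrite -hnormN opprB. Qed.

Lemma parallelogram x y :
  nrm (x - y) ^+ 2 = 2 * nrm x ^+ 2 + 2 * nrm y ^+ 2 - nrm (x + y) ^+ 2.
Proof. by rewrite !hnormD_sqr hnormN ripNr; ring. Qed.

Lemma cauchy_schwarz x y : rip x y <= nrm x * nrm y.
Proof.
apply: ler_of_sqr; first by rewrite mulr_ge0 ?hnorm_ge0.
have [/hnorm_eq0 ->|] := eqVneq (nrm y) 0; first by rewrite rip0r expr0n /= sqr_ge0.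
rewrite -sqrf_eq0 hnorm_sqr => yy0.
have yy_gt0 : 0 < rip y y by rewrite lt_def yy0 rip_ge0.
(* expand [0 <= |x - t y|^2] at the optimal [t] *)
pose t := rip x y / rip y y.
have := sqr_ge0 (nrm (x + (- t)%:C%C *: y)).
rewrite hnormD_sqr ripZr hnormZ exprMn -normrX ger0_norm ?sqr_ge0 // !hnorm_sqr.
have ht : t * rip y y = rip x y by rewrite /t divfK // gt_eqF.
rewrite exprMn !hnorm_sqr; nra.
Qed.

Lemma cauchy_schwarz_abs x y : `|rip x y| <= nrm x * nrm y.
Proof.
rewrite ler_norml cauchy_schwarz andbT lerNl -ripNr.
by apply: le_trans (cauchy_schwarz _ _) _; rewrite hnormN.
Qed.

Lemma hnorm_triangle x y : nrm (x + y) <= nrm x + nrm y.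
Proof.
apply: ler_of_sqr; first by rewrite addr_ge0 ?hnorm_ge0.
by rewrite hnormD_sqr; have := cauchy_schwarz x y; nra.
Qed.

Lemma hnorm_le_sub x y : nrm x <= nrm y + nrm (x - y).
Proof. by apply: le_trans (hnorm_triangle _ _); rewrite addrC subrK. Qed.

Lemma abs_ripB_le a b a' b' th : th <= 1 -> nrm (a - a') <= th -> nrm (b - b') <= th ->
  `|rip a b - rip a' b'| <= th * (nrm a + nrm b + 1).
Proof.
move=> th1 ha hb.
have -> : rip a b - rip a' b' = rip (a - a') b + rip a' (b - b').
  by rewrite ripBl ripBr; ring.
have na' : nrm a' <= nrm a + th by rewrite hnormB_sym in ha; have := hnorm_le_sub a' a; lra.
apply: le_trans (ler_normD _ _) _.
have := cauchy_schwarz_abs (a - a') b; have := cauchy_schwarz_abs a' (b - b').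
have := hnorm_ge0 (a - a'); have := hnorm_ge0 b; have := hnorm_ge0 a'; nra.
Qed.

End InnerProduct.

Section LinearOperator.
Context {R : realType} {V : lmodType R[i]}.

Lemma subspaceZ (D : set V) a x : Defs.subspace D -> D x -> D (a *: x).
Proof. by move=> [D0 DZ] Dx; rewrite -[a *: x]addr0; apply: DZ. Qed.

Lemma subspaceD (D : set V) x y : Defs.subspace D -> D x -> D y -> D (x + y).
Proof. by move=> [D0 DZ] Dx Dy; rewrite -[x]scale1r; apply: DZ. Qed.

Lemma subspaceB (D : set V) x y : Defs.subspace D -> D x -> D y -> D (x - y).
Proof. by move=> hD Dx Dy; rewrite -scaleN1r; apply: subspaceD => //; apply: subspaceZ. Qed.

Lemma linop0 (D : set V) A : linop D A -> A 0 = 0.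
Proof.
move=> [[D0 _] hA]; have := hA 1 0 0 D0 D0; rewrite scale1r addr0 scale1r => h.
by apply/(addrI (A 0)); rewrite addr0 -h.
Qed.

Lemma linopZ (D : set V) A a x : linop D A -> D x -> A (a *: x) = a *: A x.
Proof.
move=> hA Dx; have [[D0 _] lin] := hA.
by have := lin a x 0 Dx D0; rewrite !addr0 (linop0 hA) addr0.
Qed.

Lemma linopB (D : set V) A x y : linop D A -> D x -> D y -> A (x - y) = A x - A y.
Proof.
move=> hA Dx Dy; have [hD lin] := hA; have Dy' := subspaceZ (-1) hD Dy.
by have := lin 1 x _ Dx Dy'; rewrite !scale1r (linopZ _ hA Dy) !scaleN1r.
Qed.

End LinearOperator.

Section RieszRepresentation.
Context {R : realType} {V : lmodType R[i]} {ip : V -> V -> R[i]}.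
Hypotheses (hip : is_inner_product ip) (hcomp : hcomplete ip).
Local Notation nrm := (hnorm ip).
Local Notation rip := (@rip _ _ ip).

Variables (D : set V) (f : V -> R) (M : R).
Hypothesis hD : Defs.subspace D.
Hypothesis f_lin : forall (r : R) x y, D x -> D y -> f (r%:C%C *: x + y) = r * f x + f y.
Hypothesis f_bounded : forall x, D x -> f x <= M * nrm x.

Let f0 : f 0 = 0.
Proof.
have D0 := proj1 hD; have := f_lin 1 D0 D0; rewrite scale1r addr0 mul1r => h.
by apply/(addrI (f 0)); rewrite addr0 -h.
Qed.

Let fZ (r : R) x : D x -> f (r%:C%C *: x) = r * f x.
Proof. by move=> Dx; rewrite -[_ *: x]addr0 f_lin ?f0 ?addr0 //; case: hD. Qed.

Let fD x y : D x -> D y -> f (x + y) = f x + f y.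
Proof. by move=> Dx Dy; have := f_lin 1 Dx Dy; rewrite rmorph1 scale1r mul1r. Qed.

(* [f] is represented by the limit of a minimising sequence of the energy
   [|v|^2/2 - f v]; the parallelogram law makes such sequences Cauchy. *)
Definition energy v := nrm v ^+ 2 / 2 - f v.

Let energy_lb v : D v -> - (M ^+ 2 / 2) <= energy v.
Proof.
move=> Dv; have := f_bounded Dv; rewrite /energy.
by have := sqr_ge0 (nrm v - M); nra.
Qed.

Let energy_has_inf : has_inf (energy @` D).
Proof.
split; first by exists (energy 0), 0 => //; case: hD.
by exists (- (M ^+ 2 / 2)) => _ [v Dv <-]; apply: energy_lb.
Qed.

Local Notation m := (inf (energy @` D)).

Let energy_ge_inf v : D v -> m <= energy v.
Proof. by move=> Dv; apply: ge_inf; [case: energy_has_inf | exists v]. Qed.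

Let energy_parallelogram u v : D u -> D v ->
  nrm (u - v) ^+ 2 = 4 * energy u + 4 * energy v - 8 * energy ((2^-1)%:C%C *: (u + v)).
Proof.
move=> Du Dv; have Duv := subspaceD hD Du Dv.
rewrite parallelogram // /energy fZ // fD //.
by rewrite hnormZ // exprMn ger0_norm ?invr_ge0 ?ler0n //; field.
Qed.

Let energy_variation u v (t : R) : D u -> D v ->
  energy (u + t%:C%C *: v) = energy u + t * (rip u v - f v) + t ^+ 2 * (nrm v ^+ 2 / 2).
Proof.
move=> Du Dv; have Dtv := subspaceZ t%:C%C hD Dv.
rewrite /energy hnormD_sqr // ripZr // hnormZ // exprMn.
by rewrite -normrX ger0_norm ?sqr_ge0 // fD // fZ //; field.
Qed.

Let minimizing_cauchy (w : nat -> V) :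
  (forall n, D (w n) /\ energy (w n) < m + n.+1%:R^-1) -> hcauchy ip w.
Proof.
move=> hw eps eps0.
have [N hN] := inv_succ_lt (divr_gt0 (exprn_gt0 2 eps0) (ltr0n R 8)).
exists N => n k hn hk.
have [[Dn En] [Dk Ek]] := (hw n, hw k).
have Emid := energy_ge_inf (subspaceZ (2^-1)%:C%C hD (subspaceD hD Dn Dk)).
have le_inv j : (N <= j)%N -> j.+1%:R^-1 <= N.+1%:R^-1 :> R.
  by move=> hj; rewrite lef_pV2 ?posrE ?ltr0Sn // ler_nat ltnS.
have := hN N (leqnn N); have := le_inv _ hn; have := le_inv _ hk => h1 h2 h3.
have : nrm (w n - w k) ^+ 2 < eps ^+ 2.
  rewrite energy_parallelogram //; move: En Ek Emid h1 h2 h3.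
  by move: n.+1%:R^-1 k.+1%:R^-1 N.+1%:R^-1 => *; lra.
by move=> ?; rewrite -(@ltr_pXn2r _ 2) // ?nnegrE ?hnorm_ge0 ?ltW.
Qed.

Lemma riesz_representation : exists z, forall v, D v -> f v = rip v z.
Proof.
have /choice [w hw] : forall n : nat, exists w, D w /\ energy w < m + n.+1%:R^-1.
  move=> n; have e0 : 0 < n.+1%:R^-1 :> R by rewrite invr_gt0 ltr0Sn.
  by have [_ [w Dw <-] lt] := inf_adherent e0 energy_has_inf; exists w.
have [z hz] := hcomp (minimizing_cauchy hw).
suff f_le v : D v -> f v <= rip z v.
  exists z => v Dv; apply/eqP; rewrite eq_le ripC // f_le //=.
  have := f_le _ (subspaceZ (-1)%:C%C hD Dv); rewrite fZ // ripZr //; lra.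
move=> Dv; apply: (le_of_forall_add_mul (c := nrm v ^+ 2 / 2)) => [|t t0].
  by rewrite divr_ge0 ?sqr_ge0.
apply/ler_addgt0Pr => delta delta0.
have [N1 hN1] := inv_succ_lt (mulr_gt0 t0 (divr_gt0 delta0 (ltr0n R 2))).
have nv1 : 0 < 2 * (nrm v + 1) by rewrite mulr_gt0 // ltr_wpDl ?hnorm_ge0.
have [N2 hN2] := hz _ (divr_gt0 delta0 nv1).
pose n := maxn N1 N2; have [Dn En] := hw n.
have h1 := hN1 n (leq_maxl _ _); have h2 := hN2 n (leq_maxr _ _).
have := energy_ge_inf (subspaceD hD Dn (subspaceZ t%:C%C hD Dv)).
rewrite energy_variation // => h3.
have h4 : rip (w n) v <= rip z v + delta / 2.
  rewrite -[w n](subrK z) ripDl // addrC lerD2l.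
  apply: le_trans (cauchy_schwarz hip _ _) _.
  rewrite ltr_pdivlMr // in h2; have := hnorm_ge0 (ip:=ip) v; nra.
rewrite -(ler_pM2l t0); have := ler_wpM2l (ltW t0) h4.
by move: n.+1%:R^-1 h1 En => e h1 En h5; lra.
Qed.

End RieszRepresentation.

Section SelfAdjoint.
Context {R : realType} {V : lmodType R[i]} {ip : V -> V -> R[i]}.
Hypothesis hip : is_inner_product ip.
Local Notation nrm := (hnorm ip).
Local Notation rip := (@rip _ _ ip).

Variables (DC : set V) (C : V -> V).
Hypothesis hC : selfadjoint ip DC C.

Let C_linop : linop DC C. Proof. by case: hC. Qed.

Lemma selfadjoint_sym u v : DC u -> DC v -> ip (C u) v = ip u (C v).
Proof. by move=> Du Dv; case: hC => _ _ /(_ v (C v)) [+ _]; apply. Qed.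

Lemma selfadjoint_ripC u v : DC u -> DC v -> rip (C u) v = rip u (C v).
Proof. by move=> Du Dv; rewrite /rip selfadjoint_sym. Qed.

Lemma hnormC_sqr_le u : DC u -> DC (C u) -> nrm (C u) ^+ 2 <= nrm u * nrm (C (C u)).
Proof. by move=> Du DCu; rewrite hnorm_sqr // selfadjoint_ripC //; apply: cauchy_schwarz. Qed.

(* Riesz turns the bound into a vector [z'] with [<C w, z> = <w, z'>] on the
   domain; self-adjointness (i.e. [C = C^*]) then puts [z] in the domain. *)
Lemma selfadjoint_dom_of_bounded (z : V) (M : R) : hcomplete ip ->
  (forall w, DC w -> rip (C w) z <= M * nrm w) -> DC z.
Proof.
move=> hcomp bounded; have [[hD lin] _ graph] := hC.
have f_lin (r : R) w w' : DC w -> DC w' ->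
    rip (C (r%:C%C *: w + w')) z = r * rip (C w) z + rip (C w') z.
  by move=> Dw Dw'; rewrite lin // ripDl // ripZl.
have [z' hz'] := riesz_representation hip hcomp hD f_lin bounded.
suff [] : DC z /\ C z = z' by [].
apply/graph => w Dw; apply/eqP; rewrite eq_complex; apply/andP; split; apply/eqP.
  exact: hz'.
rewrite -!rip_scalei // -(linopZ _ C_linop Dw) hz' //; exact: subspaceZ.
Qed.

Lemma selfadjoint_dom_of_approx (z : V) (M : R) : hcomplete ip ->
  (forall eta, 0 < eta -> exists u, [/\ DC u, nrm (C u) <= M & nrm (z - u) < eta]) ->
  DC z.
Proof.
move=> hcomp approx; apply: (selfadjoint_dom_of_bounded (M := M)) => // w Dw.
apply/ler_addgt0Pr => eps eps0.
have Cw1 : 0 < nrm (C w) + 1 by rewrite ltr_wpDl ?hnorm_ge0.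
have [u [Du CuM zu]] := approx _ (divr_gt0 eps0 Cw1).
rewrite -[z](subrK u) ripDr // (selfadjoint_ripC Dw Du) addrC; apply: lerD.
  apply: le_trans (cauchy_schwarz hip _ _) _; rewrite mulrC.
  by apply: ler_wpM2r; rewrite ?hnorm_ge0.
apply: le_trans (cauchy_schwarz hip _ _) _.
rewrite ltr_pdivlMr // in zu; have := hnorm_ge0 (ip:=ip) (C w); nra.
Qed.

(* Approximate [C z] by a vector [w] of the (dense) domain and move [C] onto [w]. *)
Lemma hnormC_sqr_lsc (z : V) (M : R) : DC z -> 0 <= M -> forall eps, 0 < eps ->
  exists2 eta, 0 < eta & forall u, DC u -> nrm (C u) <= M -> nrm (z - u) < eta ->
    nrm (C z) ^+ 2 - eps <= nrm (C u) ^+ 2.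
Proof.
move=> Dz M0 eps eps0; have [[hD _] dense _] := hC.
set a := nrm (C z); have a0 : 0 <= a := hnorm_ge0 _.
have Ma : 0 < 4 * (M + a + 1) by rewrite mulr_gt0 // ltr_wpDl // addr_ge0.
have [w [Dw Czw]] := dense (C z) _ (divr_gt0 eps0 Ma).
set th := eps / _ in Czw; have th0 : 0 <= th by rewrite divr_ge0 ?ltW.
have thMa : th * (M + a) <= eps / 4.
  have : th * (4 * (M + a + 1)) = eps by rewrite /th divfK // gt_eqF.
  by nra.
have Cw1 : 0 < 4 * (nrm (C w) + 1) by rewrite mulr_gt0 // ltr_wpDl ?hnorm_ge0.
exists (eps / (4 * (nrm (C w) + 1))) => [|u Du CuM zu]; first exact: divr_gt0.
set b := nrm (C u) in CuM *; have b0 : 0 <= b := hnorm_ge0 _.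
have a2 : a ^+ 2 = rip (C z - w) (C z) + rip w (C u) + rip (C w) (z - u).
  rewrite (selfadjoint_ripC Dw (subspaceB hD Dz Du)) (linopB C_linop Dz Du).
  by rewrite ripBl // ripBr // /a hnorm_sqr //; ring.
have r1 : rip (C z - w) (C z) <= th * a.
  by apply: le_trans (cauchy_schwarz hip _ _) _; apply: ler_wpM2r => //; apply: ltW.
have r2 : rip w (C u) <= (a + th) * b.
  apply: le_trans (cauchy_schwarz hip _ _) _; apply: ler_wpM2r => //.
  by rewrite hnormB_sym // in Czw; have := hnorm_le_sub hip w (C z); rewrite -/a; lra.
have r3 : rip (C w) (z - u) <= eps / 4.
  apply: le_trans (cauchy_schwarz hip _ _) _.
  rewrite ltr_pdivlMr // in zu; have := hnorm_ge0 (ip:=ip) (C w); nra.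
have thb : th * b <= th * M by apply: ler_wpM2l.
have : a ^+ 2 <= a * b + eps / 2 by lra.
by have := sqr_ge0 (a - b); nra.
Qed.

End SelfAdjoint.

Lemma partial_sum_le_series {R : realType} (u : nat -> R) N : (forall n, 0 <= u n) ->
  ((\sum_(0 <= l < N) u l)%:E <= \sum_(0 <= l <oo) (u l)%:E)%E.
Proof. by move=> u0; rewrite -sumEFin; apply: nneseries_lim_ge => n _ _; rewrite lee_fin. Qed.

Lemma series_le_of_partial {R : realType} (u : nat -> R) (b : R) : (forall n, 0 <= u n) ->
  (forall N, \sum_(0 <= l < N) u l <= b) -> (\sum_(0 <= l <oo) (u l)%:E <= b%:E)%E.
Proof.
move=> u0 hb; apply: lime_le; first by apply: is_cvg_nneseries => n _ _; rewrite lee_fin.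
by apply: nearW => N; rewrite sumEFin lee_fin.
Qed.

Section CoreApproximation.
Context {R : realType} {V : lmodType R[i]} {ip : V -> V -> R[i]}.
Hypothesis hip : is_inner_product ip.
Local Notation nrm := (hnorm ip).
Local Notation rip := (@rip _ _ ip).

Variables (DC : set V) (C : V -> V) (D1 : set V) (x : V).
Hypothesis hC : selfadjoint ip DC C.
Hypothesis hD1 : is_core ip (dom_sq DC C) (fun y => C (C y)) D1.
Hypothesis Dx : dom_sq DC C x.

Definition rel_bounded (A : V -> V) := exists2 DA, linop DA A /\ DC `<=` DA &
  exists k, forall w, DC w -> nrm (A w) ^+ 2 <= k * cnorm2 ip C w.

(* "eventually" for [y] in the core tending to [x] in the graph norm of [C^2] *)
Definition near_core (P : V -> Prop) := exists2 eta : R, 0 < eta &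
  forall y, D1 y -> nrm (x - y) < eta -> nrm (C (C x) - C (C y)) < eta -> P y.

Definition core_continuous (A : V -> V) :=
  forall eta, 0 < eta -> near_core (fun y => nrm (A x - A y) < eta).

Lemma near_coreW (P Q : V -> Prop) :
  (forall y, D1 y -> P y -> Q y) -> near_core P -> near_core Q.
Proof. by move=> PQ [eta eta0 hP]; exists eta => // y Dy h1 h2; apply/PQ/hP. Qed.

Lemma near_core_and (P Q : V -> Prop) :
  near_core P -> near_core Q -> near_core (fun y => P y /\ Q y).
Proof.
move=> [e1 e10 h1] [e2 e20 h2]; exists (Num.min e1 e2); first by rewrite lt_min e10.
by move=> y Dy; rewrite !lt_min => /andP[a b] /andP[c d]; split; [apply: h1|apply: h2].
Qed.

Lemma near_core_ex (P : V -> Prop) : near_core P -> exists y, D1 y /\ P y.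
Proof.
move=> [e e0 hP]; have [_ _ dense] := hD1; have [y [Dy [h1 h2]]] := dense x Dx e e0.
by exists y; split => //; apply: hP.
Qed.

Let C_linop : linop DC C. Proof. by case: hC. Qed.

Let core_sub y : D1 y -> [/\ DC (x - y), C (x - y) = C x - C y,
  DC (C x - C y) & C (C x - C y) = C (C x) - C (C y)].
Proof.
move=> Dy; have [hD _] := C_linop; have [sub _ _] := hD1; have [DCy DCCy] := sub y Dy.
have [DCx DCCx] := Dx.
split; [exact: subspaceB | exact: (linopB C_linop) | exact: subspaceB |].
exact: (linopB C_linop).
Qed.

Lemma core_continuous_id : core_continuous id.
Proof. by move=> eta eta0; exists eta. Qed.

Lemma core_continuous_CC : core_continuous (fun y => C (C y)).
Proof. by move=> eta eta0; exists eta. Qed.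

Lemma core_continuous_C : core_continuous C.
Proof.
move=> eta eta0; exists eta => // y Dy h1 h2; have [Du eCu DCu eCCu] := core_sub Dy.
have := hnormC_sqr_le hip hC Du; rewrite eCu eCCu => /(_ DCu) h3.
have := hnorm_ge0 (ip:=ip) (x - y); have := hnorm_ge0 (ip:=ip) (C x - C y).
have := hnorm_ge0 (ip:=ip) (C (C x) - C (C y)); nra.
Qed.

Lemma core_continuous_rel_bounded A : rel_bounded A -> core_continuous A.
Proof.
move=> [DA [A_linop sDA] [k hk]] eta eta0.
have k1 : 0 < `|k| + 1 by rewrite ltr_wpDl.
pose th := eta / (`|k| + 1); have th0 : 0 < th by rewrite divr_gt0.
have eth : th * (`|k| + 1) = eta by rewrite /th divfK // gt_eqF.
apply: near_coreW (near_core_and (core_continuous_id th0) (core_continuous_C th0)).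
move=> y Dy [/= h1 h2]; have [Du eCu _ _] := core_sub Dy.
have [DCx _] := Dx; have [sub _ _] := hD1; have [DCy _] := sub y Dy.
rewrite -(linopB A_linop (sDA _ DCx) (sDA _ DCy)).
have := hk _ Du; rewrite /cnorm2 eCu => h3.
have h4 : k * (nrm (x - y) ^+ 2 + nrm (C x - C y) ^+ 2)
       <= `|k| * (nrm (x - y) ^+ 2 + nrm (C x - C y) ^+ 2).
  by apply: ler_wpM2r; [rewrite addr_ge0 // sqr_ge0 | exact: ler_norm].
have h5 : nrm (x - y) ^+ 2 + nrm (C x - C y) ^+ 2 <= 2 * th ^+ 2.
  by have := hnorm_ge0 (ip:=ip) (x - y); have := hnorm_ge0 (ip:=ip) (C x - C y); nra.
have h6 := ler_wpM2l (normr_ge0 k) h5.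
have : `|k| * (2 * th ^+ 2) < eta ^+ 2 by rewrite -eth; nra.
by have := hnorm_ge0 (ip:=ip) (A (x - y)); nra.
Qed.

Lemma near_core_rip u v : core_continuous u -> core_continuous v ->
  forall d, 0 < d -> near_core (fun y => `|rip (u x) (v x) - rip (u y) (v y)| <= d).
Proof.
move=> cu cv d d0; set S := nrm (u x) + nrm (v x) + 1.
have S0 : 0 < S by rewrite ltr_wpDl ?addr_ge0 ?hnorm_ge0.
pose th := Num.min 1 (d / S).
have th0 : 0 < th by rewrite lt_min ltr01 divr_gt0.
have thS : th * S <= d by rewrite -ler_pdivlMr // ge_min lexx orbT.
apply: near_coreW (near_core_and (cu _ th0) (cv _ th0)) => y _ [h1 h2].
apply: le_trans (abs_ripB_le hip _ (ltW h1) (ltW h2)) thS.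
by rewrite ge_min lexx.
Qed.

End CoreApproximation.

Section CoreExtension.
Context {R : realType} {V : lmodType R[i]} {ip : V -> V -> R[i]}.
Hypotheses (hip : is_inner_product ip) (hcomp : hcomplete ip).
Local Notation nrm := (hnorm ip).
Local Notation rip := (@rip _ _ ip).

Variables (DC : set V) (C : V -> V) (D1 : set V) (x : V).
Hypothesis hC : selfadjoint ip DC C.
Hypothesis hD1 : is_core ip (dom_sq DC C) (fun y => C (C y)) D1.
Hypothesis Dx : dom_sq DC C x.

Variables (g : V -> V) (Ls : nat -> V -> V) (a : R).
Hypotheses (g_bounded : rel_bounded (ip:=ip) DC C g) (Ls_bounded : forall l, rel_bounded (ip:=ip) DC C (Ls l)).
Hypothesis a_ge0 : 0 <= a.
Hypothesis Ls_dom : forall l y, D1 y -> DC (Ls l y).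
Hypothesis core_bound : forall y, D1 y ->
  ((2 * rip (C (C y)) (g y))%:E + \sum_(0 <= l <oo) (nrm (C (Ls l y)) ^+ 2)%:E
    <= (a * cnorm2 ip C y)%:E)%E.

Local Notation near := (near_core (ip:=ip) C D1 x).
Local Notation cont := (core_continuous (ip:=ip) C D1 x).

Let budget y := a * cnorm2 ip C y - 2 * rip (C (C y)) (g y).

Let partial_le_budget y N : D1 y -> \sum_(0 <= l < N) nrm (C (Ls l y)) ^+ 2 <= budget y.
Proof.
move=> Dy; have u0 l : 0 <= nrm (C (Ls l y)) ^+ 2 by apply: sqr_ge0.
have := le_trans (leeD2l _ (partial_sum_le_series N u0)) (core_bound Dy).
by rewrite -EFinD lee_fin /budget => h; lra.
Qed.

Let near_budget d : 0 < d -> near (fun y => budget y <= budget x + d).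
Proof.
move=> d0; pose d' := d / (2 * a + 2).
have a2 : 0 < 2 * a + 2 by rewrite ltr_wpDl // mulr_ge0.
have d'0 : 0 < d' by rewrite divr_gt0.
have dd' : d' * (2 * a + 2) = d by rewrite /d' divfK // gt_eqF.
have C_cont : cont C := core_continuous_C hip hC hD1 Dx.
have id_cont : cont id := core_continuous_id C D1 x.
have := near_core_rip hip id_cont id_cont d'0.
move=> /near_core_and /(_ (near_core_rip hip C_cont C_cont d'0)).
move=> /near_core_and /(_ (near_core_rip hip (core_continuous_CC C D1 x)
  (core_continuous_rel_bounded hip hC hD1 Dx g_bounded) d'0)).
apply: near_coreW => y _ [[/=]]; rewrite !ler_norml => /andP[p1 p2] /andP[q1 q2] /andP[r1 r2].
have e z : cnorm2 ip C z = rip z z + rip (C z) (C z) by rewrite /cnorm2 !hnorm_sqr.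
have : a * (rip y y + rip (C y) (C y)) <= a * (rip x x + rip (C x) (C x) + 2 * d').
  by apply: ler_wpM2l => //; lra.
rewrite /budget !e; lra.
Qed.

Let M := Num.sqrt (`|budget x| + 1).
Let M_ge0 : 0 <= M. Proof. exact: sqrtr_ge0. Qed.

Let near_Ls_bounded l : near (fun y => nrm (C (Ls l y)) <= M).
Proof.
apply: near_coreW (near_budget ltr01) => y Dy hB.
have := partial_le_budget l.+1 Dy; rewrite big_nat_recr //= => hl.
have sum0 : 0 <= \sum_(0 <= k < l) nrm (C (Ls k y)) ^+ 2 by apply: sumr_ge0 => k _; apply: sqr_ge0.
have M2 : M ^+ 2 = `|budget x| + 1 by rewrite sqr_sqrtr // addr_ge0.
apply: ler_of_sqr => //.
by rewrite M2; have := ler_norm (budget x); lra.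
Qed.

Let near_Ls l eta : 0 < eta -> near (fun y => nrm (Ls l x - Ls l y) < eta).
Proof. exact: (core_continuous_rel_bounded hip hC hD1 Dx (Ls_bounded l)). Qed.

Lemma Ls_dom_sq l : DC (Ls l x).
Proof.
apply: (selfadjoint_dom_of_approx hip hC (M := M)) => // eta eta0.
have [y [Dy [hM hL]]] := near_core_ex hD1 Dx (near_core_and (near_Ls_bounded l) (near_Ls l eta0)).
by exists (Ls l y); split => //; apply: Ls_dom.
Qed.

Let near_Ls_lsc l eps : 0 < eps ->
  near (fun y => nrm (C (Ls l x)) ^+ 2 - eps <= nrm (C (Ls l y)) ^+ 2).
Proof.
move=> eps0; have [eta eta0 lsc] := hnormC_sqr_lsc hip hC (Ls_dom_sq l) M_ge0 eps0.
apply: near_coreW (near_core_and (near_Ls_bounded l) (near_Ls l eta0)) => y Dy [hM hL].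
exact: lsc (Ls_dom l Dy) hM hL.
Qed.

Let near_partial_lsc N eps : 0 < eps -> near (fun y =>
  \sum_(0 <= l < N) nrm (C (Ls l x)) ^+ 2 - eps <= \sum_(0 <= l < N) nrm (C (Ls l y)) ^+ 2).
Proof.
elim: N eps => [|N IH] eps eps0.
  by exists 1 => // y _ _ _; rewrite !big_geq // sub0r oppr_le0 ltW.
have e2 : 0 < eps / 2 by rewrite divr_gt0.
apply: near_coreW (near_core_and (IH _ e2) (near_Ls_lsc N e2)) => y _ [p q].
by rewrite !big_nat_recr //=; lra.
Qed.

Lemma dom_sq_bound_of_core : (forall l, DC (Ls l x)) /\
  ((2 * rip (C (C x)) (g x))%:E + \sum_(0 <= l <oo) (nrm (C (Ls l x)) ^+ 2)%:E
    <= (a * cnorm2 ip C x)%:E)%E.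
Proof.
split; first exact: Ls_dom_sq.
rewrite -lee_suber_addl // -EFinB.
apply: series_le_of_partial => [n|N]; first exact: sqr_ge0.
apply/ler_addgt0Pr => eps eps0; have e2 : 0 < eps / 2 by rewrite divr_gt0.
have [y [Dy [p q]]] := near_core_ex hD1 Dx
  (near_core_and (near_budget e2) (near_partial_lsc N e2)).
by have := partial_le_budget N Dy; rewrite /budget in p *; lra.
Qed.

End CoreExtension.

Theorem lemma5p3 (R : realType) (V : lmodType R[i]) (ip : V -> V -> R[i])
  (hH : separable_hilbert ip)
  (DC : set V) (C : V -> V)
  (hCsa : selfadjoint ip DC C) (hCpos : positive_op ip DC C)
  (DG : R -> set V) (G : R -> V -> V)
  (DL : nat -> R -> set V) (L : nat -> R -> V -> V)
  (hG : forall t : R, 0 <= t -> linop (DG t) (G t))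
  (hL : forall (l : nat) (t : R), 0 <= t -> linop (DL l t) (L l t))
  (hDG : forall t : R, 0 <= t -> DC `<=` DG t)
  (hDL : forall (l : nat) (t : R), 0 <= t -> DC `<=` DL l t)
  (K : R -> R) (hKmon : nondecreasing_on_pos K) (hKpos : nonneg_on_pos K)
  (H21 : forall (t : R) (x : V), 0 <= t -> DC x ->
     hnorm ip (G t x) ^+ 2 <= K t * cnorm2 ip C x)
  (Kl : nat -> R -> R) (hKlmon : forall l : nat, nondecreasing_on_pos (Kl l))
  (H22 : forall (l : nat) (t : R) (x : V), 0 <= t -> DC x ->
     hnorm ip (L l t x) ^+ 2 <= Kl l t * cnorm2 ip C x)
  (alpha : R -> R) (halmon : nondecreasing_on_pos alpha) (halpos : nonneg_on_pos alpha)
  (D1 : set V) (hD1 : is_core ip (dom_sq DC C) (fun x => C (C x)) D1)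
  (H23dom : forall (l : nat) (t : R) (x : V), 0 <= t -> D1 x -> DC (L l t x))
  (H23 : forall (t : R) (x : V), 0 <= t -> D1 x ->
     ((2 * @complex.Re R (ip (C (C x)) (G t x)) : R)%:E
        + \sum_(0 <= l <oo) ((hnorm ip (C (L l t x))) ^+ 2)%:E
      <= (alpha t * cnorm2 ip C x)%:E)%E) :
  forall (t : R) (x : V), 0 <= t -> dom_sq DC C x ->
    (forall l : nat, DC (L l t x)) /\
    ((2 * @complex.Re R (ip (C (C x)) (G t x)) : R)%:E
        + \sum_(0 <= l <oo) ((hnorm ip (C (L l t x))) ^+ 2)%:E
      <= (alpha t * cnorm2 ip C x)%:E)%E.
Proof.
move=> t x t0 Dx; have [hip hcomp _] := hH.
have G_bounded : rel_bounded (ip:=ip) DC C (G t).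
  by exists (DG t); [split; [exact: hG | exact: hDG] | exists (K t) => w; exact: H21].
have L_bounded l : rel_bounded (ip:=ip) DC C (L l t).
  by exists (DL l t); [split; [exact: hL | exact: hDL] | exists (Kl l t) => w; exact: H22].
exact: (dom_sq_bound_of_core hip hcomp hCsa hD1 Dx G_bounded L_bounded
  (halpos t t0) (fun l y => H23dom l t y t0) (fun y => H23 t y t0)).
Qed.
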